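(* Let $\Gamma_3^*\subseteq\mathbb{R}^7$ be the set of entropy vectors of triples of discrete random variables. Let $\mathbf{e}_1=[1,0,0,1,1,0,1]^\intercal$, $\mathbf{e}_2=[0,1,0,1,0,1,1]^\intercal$, $\mathbf{e}_3=[0,0,1,0,1,1,1]^\intercal$, $\mathbf{e}_{123'}=[1,1,1,2,2,2,2]^\intercal$, and $\Theta=\mathrm{cone}(\mathbf{e}_1,\mathbf{e}_2,\mathbf{e}_3,\mathbf{e}_{123'})$. Let $\Theta^{\mathrm{in}}$ be the set of all vectors $\lambda_1\mathbf{e}_1+\lambda_2\mathbf{e}_2+\lambda_3\mathbf{e}_3+\lambda_{123'}\mathbf{e}_{123'}$ with $\lambda_1,\lambda_2,\lambda_3\ge 0$ and $\lambda_{123'}=\log m$ for some $m\in\mathbb{N}$. Then $\Theta^{\mathrm{in}}\subseteq\Theta\cap\Gamma_3^*$.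
   Context: All logarithms are base 2 and entropies are in bits. For a discrete random vector $(X_1,X_2,X_3)$, its entropy vector is $[h_1,h_2,h_3,h_{12},h_{13},h_{23},h_{123}]^\intercal\in\mathbb{R}^7$, where $h_\alpha$ is the Shannon entropy of $(X_i)_{i\in\alpha}$. *)

From HB Require Import structures.
From mathcomp Require Import all_boot all_order all_algebra.
From mathcomp Require Import all_classical all_reals.
From mathcomp Require Import exp.
Set Implicit Arguments. Unset Strict Implicit. Unset Printing Implicit Defensive.
Import Order.TTheory GRing.Theory Num.Theory.
Local Open Scope ring_scope.
Local Open Scope classical_set_scope.

Section Entropy.
Variable R : realType.

Definition log2 (x : R) : R := ln x / ln 2.

Definition is_pmf (T : finType) (p : {ffun T -> R}) : Prop :=
  (forall x, 0 <= p x) /\ \sum_(x : T) p x = 1.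

Definition pushpmf (T U : finType) (p : {ffun T -> R}) (f : T -> U) : {ffun U -> R} :=
  [ffun u => \sum_(x : T | f x == u) p x].

Definition entropy (U : finType) (q : {ffun U -> R}) : R :=
  - \sum_(u : U) (if q u == 0 then 0 else q u * log2 (q u)).

Definition Hf (T U : finType) (p : {ffun T -> R}) (f : T -> U) : R :=
  entropy (pushpmf p f).

(* entropy vector [h1,h2,h3,h12,h13,h23,h123] of (X1,X2,X3) with joint pmf p *)
Definition entvec (T1 T2 T3 : finType) (p : {ffun (T1 * T2 * T3)%type -> R})
  : 'rV[R]_7 :=
  \row_(i < 7) nth 0
    [:: Hf p (fun x => x.1.1);
        Hf p (fun x => x.1.2);
        Hf p (fun x => x.2);
        Hf p (fun x => (x.1.1, x.1.2));
        Hf p (fun x => (x.1.1, x.2));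
        Hf p (fun x => (x.1.2, x.2));
        Hf p (fun x => x)] i.

(* Gamma_3^* : entropy vectors of triples of (finitely supported) discrete r.v.s *)
Definition Gamma3star : set 'rV[R]_7 :=
  [set h | exists (T1 T2 T3 : finType) (p : {ffun (T1 * T2 * T3)%type -> R}),
           is_pmf p /\ h = entvec p].

Definition vec7 (a b c d e f g : R) : 'rV[R]_7 :=
  \row_(i < 7) nth 0 [:: a; b; c; d; e; f; g] i.

Definition e1 : 'rV[R]_7 := vec7 1 0 0 1 1 0 1.
Definition e2 : 'rV[R]_7 := vec7 0 1 0 1 0 1 1.
Definition e3 : 'rV[R]_7 := vec7 0 0 1 0 1 1 1.
Definition e123' : 'rV[R]_7 := vec7 1 1 1 2 2 2 2.

Definition Theta : set 'rV[R]_7 :=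
  [set v | exists a1 a2 a3 a4 : R, [/\ 0 <= a1, 0 <= a2, 0 <= a3, 0 <= a4 &
     v = a1 *: e1 + a2 *: e2 + a3 *: e3 + a4 *: e123']].

Definition Theta_in : set 'rV[R]_7 :=
  [set v | exists (l1 l2 l3 : R) (m : nat), [/\ 0 <= l1, 0 <= l2, 0 <= l3, (0 < m)%N &
     v = l1 *: e1 + l2 *: e2 + l3 *: e3 + log2 m%:R *: e123']].

End Entropy.

From mathcomp Require Import all_boot all_order all_algebra.
From mathcomp Require Import all_classical all_reals exp.
From mathcomp Require Import ring lra.
From mathcomp Require Import topology normedtype.
Import numFieldNormedType.Exports.
Set Implicit Arguments. Unset Strict Implicit. Unset Printing Implicit Defensive.
Import Order.TTheory GRing.Theory Num.Theory.
Local Open Scope ring_scope.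
Local Open Scope classical_set_scope.

(* Entropy vectors add under independent juxtaposition: if (X1,X2,X3) and
   (Y1,Y2,Y3) are independent, the triple ((X1,Y1),(X2,Y2),(X3,Y3)) has entropy
   vector h_X + h_Y, so Gamma_3^* is closed under addition and it suffices to
   realise each generator separately.  l e1 is the entropy vector of
   (A, const, const) for any A with H(A) = l, and every l >= 0 is such an
   entropy: take a uniform variable on 2^k points together with an independent
   Bernoulli variable, whose entropy sweeps [0, 1] by continuity.  Finally
   log m e123' is the entropy vector of (U, V, U + V) for independent U, V
   uniform on Z/m: any one of them is uniform and any two determine the third. *)

Definition zip2 (A B C D : Type) (y : (A * B) * (C * D)) : (A * C) * (B * D) :=
  ((y.1.1, y.2.1), (y.1.2, y.2.2)).

Definition zip3 (A B C D E F : Type) (y : (A * B * C) * (D * E * F)) :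
  (A * D) * (B * E) * (C * F) :=
  ((y.1.1.1, y.2.1.1), (y.1.1.2, y.2.1.2), (y.1.2, y.2.2)).

Lemma zip2_inj (A B C D : Type) : injective (@zip2 A B C D).
Proof. by move=> [[? ?] [? ?]] [[? ?] [? ?]] [-> -> -> ->]. Qed.

Lemma zip3_inj (A B C D E F : Type) : injective (@zip3 A B C D E F).
Proof. by move=> [[[? ?] ?] [[? ?] ?]] [[[? ?] ?] [[? ?] ?]] [-> -> -> -> -> ->]. Qed.

Section Entropy.
Variable R : realType.
Implicit Types (T U V W X : finType).

Lemma ln2_gt0 : 0 < ln (2 : R).
Proof. by apply: ln_gt0; rewrite ltr1n. Qed.

Lemma log2_natr_ge0 n : 0 <= log2 (n.+1%:R : R).
Proof. by rewrite divr_ge0 ?ln_ge0 ?ler1n // ltW // ln2_gt0. Qed.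

Definition xlog2x (x : R) : R := if x == 0 then 0 else x * log2 x.

Lemma entropyE U (q : {ffun U -> R}) : entropy q = - \sum_u xlog2x (q u).
Proof. by []. Qed.

Lemma xlog2xM x y : 0 <= x -> 0 <= y -> xlog2x (x * y) = x * xlog2x y + y * xlog2x x.
Proof.
rewrite /xlog2x le0r => /orP[/eqP->|x0]; first by rewrite mul0r eqxx mul0r mulr0 addr0.
rewrite le0r => /orP[/eqP->|y0]; first by rewrite mulr0 eqxx mul0r mulr0 add0r.
by rewrite mulf_eq0 !gt_eqF //= /log2 lnM ?posrE //; ring.
Qed.

Lemma xlog2x_sum_subsingleton U (P : pred U) (F : U -> R) :
  {in P &, forall a b, a = b} ->
  xlog2x (\sum_(u | P u) F u) = \sum_(u | P u) xlog2x (F u).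
Proof.
move=> P1; case: (pickP P) => [a Pa|P0]; last by rewrite !big_pred0 // /xlog2x eqxx.
by rewrite !(big_pred1 a) // => u; apply/idP/eqP => [Pu|->//]; apply: P1.
Qed.

Lemma pushpmf_comp T U V (p : {ffun T -> R}) (f : T -> U) (h : U -> V) :
  pushpmf p (h \o f) = pushpmf (pushpmf p f) h.
Proof.
apply/ffunP => v; rewrite !ffunE (partition_big f (fun u => h u == v)) //=.
apply: eq_bigr => u huv; rewrite ffunE; apply: eq_bigl => x.
by case: (f x =P u) => [->|]; rewrite ?andbT ?andbF // huv.
Qed.

Lemma Hf_push T U V (p : {ffun T -> R}) (g : T -> U) (f : U -> V) :
  Hf (pushpmf p g) f = Hf p (f \o g).
Proof. by rewrite /Hf pushpmf_comp. Qed.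

Lemma entropy_push_inj U V (q : {ffun U -> R}) (h : U -> V) :
  injective h -> entropy (pushpmf q h) = entropy q.
Proof.
move=> h_inj; rewrite !entropyE (partition_big h xpredT) //=.
congr (- _); apply: eq_bigr => v _; rewrite ffunE xlog2x_sum_subsingleton //.
by move=> a b /eqP <- /eqP /h_inj.
Qed.

Lemma Hf_inj_entropy T U (p : {ffun T -> R}) (f : T -> U) :
  injective f -> Hf p f = entropy p.
Proof. exact: entropy_push_inj. Qed.

Lemma Hf_comp_inj T U V (p : {ffun T -> R}) (f : T -> U) (h : U -> V) (F : T -> V) :
  injective h -> (forall x, F x = h (f x)) -> Hf p F = Hf p f.
Proof.
move=> h_inj eF; have -> : F = h \o f by apply: funext.
by rewrite /Hf pushpmf_comp entropy_push_inj.
Qed.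

Lemma Hf_comp_bij T U (p : {ffun T -> R}) (f : T -> U) (tau : T -> T) :
  bijective tau -> (forall x, p (tau x) = p x) -> Hf p f = Hf p (f \o tau).
Proof.
move=> tau_bij p_tau; congr entropy; apply/ffunP => u; rewrite !ffunE.
by rewrite (reindex tau) /=; [apply: eq_bigr => x _; rewrite p_tau | exact: onW_bij].
Qed.

Lemma is_pmf_push T U (p : {ffun T -> R}) (f : T -> U) : is_pmf p -> is_pmf (pushpmf p f).
Proof.
move=> [p_ge0 p_sum]; split=> [u|]; first by rewrite ffunE sumr_ge0.
rewrite -p_sum (partition_big f xpredT) //=.
by apply: eq_bigr => u _; rewrite ffunE.
Qed.

Lemma Hf_subsingleton T U (p : {ffun T -> R}) (f : T -> U) :
  (forall u v : U, u = v) -> is_pmf p -> Hf p f = 0.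
Proof.
move=> U1 /(is_pmf_push f) [_ q_sum].
rewrite /Hf entropyE -xlog2x_sum_subsingleton; last by move=> u v _ _; apply: U1.
by rewrite q_sum /xlog2x oner_eq0 /log2 ln1 mul0r mulr0 oppr0.
Qed.

Definition prodp T U (pa : {ffun T -> R}) (pb : {ffun U -> R}) : {ffun T * U -> R} :=
  [ffun x => pa x.1 * pb x.2].

Lemma is_pmf_prod T U (pa : {ffun T -> R}) (pb : {ffun U -> R}) :
  is_pmf pa -> is_pmf pb -> is_pmf (prodp pa pb).
Proof.
move=> [pa_ge0 pa_sum] [pb_ge0 pb_sum]; split=> [x|]; first by rewrite ffunE mulr_ge0.
under eq_bigr do rewrite ffunE.
rewrite -(pair_bigA _ (fun a b => pa a * pb b)) /= -pa_sum.
by apply: eq_bigr => a _; rewrite -mulr_sumr pb_sum mulr1.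
Qed.

Lemma entropy_prod T U (pa : {ffun T -> R}) (pb : {ffun U -> R}) :
  is_pmf pa -> is_pmf pb -> entropy (prodp pa pb) = entropy pa + entropy pb.
Proof.
move=> [pa_ge0 pa_sum] [pb_ge0 pb_sum]; rewrite !entropyE.
under eq_bigr do rewrite ffunE xlog2xM //.
rewrite -(pair_bigA _ (fun a b => pa a * xlog2x (pb b) + pb b * xlog2x (pa a))) /=.
under eq_bigr do rewrite big_split /= -mulr_sumr -mulr_suml pb_sum mul1r.
by rewrite big_split /= -mulr_suml pa_sum mul1r opprD addrC.
Qed.

Lemma pushpmf_prod T U V W (pa : {ffun T -> R}) (pb : {ffun U -> R})
    (fa : T -> V) (fb : U -> W) :
  pushpmf (prodp pa pb) (fun x => (fa x.1, fb x.2)) =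
  prodp (pushpmf pa fa) (pushpmf pb fb).
Proof.
apply/ffunP => -[v w]; rewrite !ffunE /= mulr_suml.
under [RHS]eq_bigr do rewrite mulr_sumr.
rewrite pair_big_dep /=; apply: eq_big => [[a b]|[a b] _] /=; first by rewrite xpair_eqE.
by rewrite ffunE.
Qed.

Lemma Hf_prod T U V W X (h : V * W -> X) (p : {ffun T -> R}) (q : {ffun U -> R})
    (f : T -> V) (g : U -> W) (F : T * U -> X) :
  injective h -> (forall s, F s = h (f s.1, g s.2)) -> is_pmf p -> is_pmf q ->
  Hf (prodp p q) F = Hf p f + Hf q g.
Proof.
move=> h_inj eF p_pmf q_pmf; rewrite (Hf_comp_inj _ h_inj eF) /Hf pushpmf_prod.
by rewrite entropy_prod //; exact: is_pmf_push.
Qed.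

Lemma Hf_prod_fst T U V (p : {ffun T -> R}) (q : {ffun U -> R}) (f : T -> V) :
  is_pmf p -> is_pmf q -> Hf (prodp p q) (fun s => f s.1) = Hf p f.
Proof.
move=> p_pmf q_pmf; rewrite (Hf_prod (h := fst) (f := f) (g := fun=> tt)) //.
  by rewrite [Hf q _]Hf_subsingleton ?addr0 // => -[] [].
by move=> [a []] [b []] /= ->.
Qed.

Lemma Hf_prod_snd T U V (p : {ffun T -> R}) (q : {ffun U -> R}) (g : U -> V) :
  is_pmf p -> is_pmf q -> Hf (prodp p q) (fun s => g s.2) = Hf q g.
Proof.
move=> p_pmf q_pmf; rewrite (Hf_prod (h := snd) (f := fun=> tt) (g := g)) //.
  by rewrite [Hf p _]Hf_subsingleton ?add0r // => -[] [].
by move=> [[] a] [[] b] /= ->.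
Qed.

Definition unif T : {ffun T -> R} := [ffun => #|T|%:R^-1].

Lemma is_pmf_unif T : (0 < #|T|)%N -> is_pmf (unif T).
Proof.
move=> T_gt0; split=> [x|]; first by rewrite ffunE invr_ge0 ler0n.
under eq_bigr do rewrite ffunE.
by rewrite sumr_const cardT -cardE -[_ *+ _]mulr_natr mulVf // pnatr_eq0 -lt0n.
Qed.

Lemma entropy_unif T : (0 < #|T|)%N -> entropy (unif T) = log2 #|T|%:R.
Proof.
move=> T_gt0; have T_neq0 : (#|T|%:R : R) != 0 by rewrite pnatr_eq0 -lt0n.
rewrite entropyE; under eq_bigr do rewrite ffunE /xlog2x invr_eq0 (negbTE T_neq0).
rewrite sumr_const cardT -cardE /log2 lnV ?posrE ?ltr0n //.
rewrite -mulNrn -[_ *+ _]mulr_natr; field.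
by rewrite T_neq0 gt_eqF // ln2_gt0.
Qed.

Definition bern (t : R) : {ffun bool -> R} := [ffun b => if b then t else 1 - t].

Lemma is_pmf_bern t : 0 <= t <= 1 -> is_pmf (bern t).
Proof.
move=> /andP[t_ge0 t_le1]; split=> [b|]; first by rewrite ffunE; case: b; lra.
by rewrite big_bool !ffunE /= addrC subrK.
Qed.

Lemma entropy_bern0 : entropy (bern 0) = 0.
Proof.
rewrite entropyE big_bool !ffunE /= /xlog2x eqxx subr0 oner_eq0.
by rewrite /log2 ln1 mul0r mulr0 addr0 oppr0.
Qed.

Definition binent (t : R) : R := - (t * ln t + (1 - t) * ln (1 - t)).

Lemma entropy_bern t : 0 < t < 1 -> entropy (bern t) = binent t / ln 2.
Proof.
move=> /andP[t_gt0 t_lt1]; rewrite entropyE big_bool !ffunE /= /xlog2x /log2.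
rewrite !gt_eqF ?subr_gt0 // /binent; field.
by rewrite gt_eqF // ln2_gt0.
Qed.

Lemma binent_half : binent 2^-1 = ln 2.
Proof.
rewrite /binent (_ : 1 - 2^-1 = 2^-1 :> R); last by field.
by rewrite lnV ?posrE //; field.
Qed.

Lemma continuous_binent (x : R) : 0 < x < 1 -> {for x, continuous binent}.
Proof.
move=> /andP[x_gt0 x_lt1].
have cvg_1B : (fun t : R => 1 - t) @ x --> 1 - x.
  by apply: cvgB; [exact: cvg_cst | exact: cvg_id].
have cvg_ln1B : (fun t : R => ln (1 - t)) @ x --> ln (1 - x).
  by apply: (cvg_comp _ _ cvg_1B); apply: continuous_ln; rewrite subr_gt0.
apply: cvgN; apply: cvgD; first exact: (cvgM cvg_id (continuous_ln x_gt0)).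
exact: cvgM cvg_1B cvg_ln1B.
Qed.

Lemma subr1_le_xlnx (x : R) : 0 < x -> x - 1 <= x * ln x.
Proof.
move=> x_gt0; have xV_gt0 : 0 < x^-1 by rewrite invr_gt0.
have xxV : x * x^-1 = 1 by rewrite mulfV ?gt_eqF.
have : ln (1 + (x^-1 - 1)) <= x^-1 - 1 by apply: le_ln1Dx; lra.
rewrite [1 + _]addrC subrK lnV ?posrE //; nra.
Qed.

Lemma binent_sqr_le (s : R) : 0 < s < 1 -> binent (s ^+ 2) <= 2 * s.
Proof.
move=> /andP[s_gt0 s_lt1].
have slns := subr1_le_xlnx s_gt0.
have t_lt1 : 0 < 1 - s ^+ 2 by rewrite subr_gt0 expr_lt1 ?ltW.
have tlnt := subr1_le_xlnx t_lt1.
by rewrite /binent lnXn // -mulr_natr; nra.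
Qed.

Lemma entropy_bern_onto (f : R) :
  0 <= f <= 1 -> exists2 t, 0 <= t <= 1 & entropy (bern t) = f.
Proof.
move=> /andP[f_ge0 f_le1]; have [->|f_neq0] := eqVneq f 0.
  by exists 0; rewrite ?lexx ?ler01 ?entropy_bern0.
have f_gt0 : 0 < f by rewrite lt0r f_neq0.
have ln2_pos := ln2_gt0; have ln2_lt2 : ln (2 : R) < 2 by apply: ln_sublinear.
(* [s] is chosen so that binent (s ^+ 2) <= 2 * s <= f * ln 2 <= binent 2^-1. *)
pose s := f * ln 2 / 4.
have s_gt0 : 0 < s by rewrite divr_gt0 ?mulr_gt0.
have fln2E : f * ln 2 = 4 * s by rewrite /s; field.
have s_lt : s < 2^-1 by rewrite /s; nra.
have binent_s := @binent_sqr_le s (ltac:(apply/andP; split; lra)).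
have [t t_itv binent_t] : exists2 t, t \in `[s ^+ 2, 2^-1]%R & binent t = f * ln 2.
  apply: IVT; first nra.
    apply: continuous_in_subspaceT => x; rewrite inE /= in_itv /= => /andP[x_ge x_le].
    by apply: continuous_binent; apply/andP; split; nra.
  rewrite binent_half; apply/andP; split.
    by rewrite ge_min fln2E; apply/orP; left; lra.
  by rewrite le_max; apply/orP; right; nra.
move: t_itv; rewrite in_itv /= => /andP[t_ge t_le].
have t_gt0 : 0 < t by nra.
exists t; first by apply/andP; split; lra.
rewrite entropy_bern ?binent_t; first by field; rewrite gt_eqF.
by apply/andP; split; lra.
Qed.

Lemma entropy_onto (l : R) : 0 <= l ->
  exists (A : finType) (q : {ffun A -> R}), is_pmf q /\ entropy q = l.
Proof.
move=> l_ge0; have /andP[k_le k_gt] := truncn_itv l_ge0; set k := Num.truncn l in k_le k_gt.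
have [|t t_01 ent_t] := @entropy_bern_onto (l - k%:R); first by apply/andP; split; lra.
have unif_pmf : is_pmf (unif 'I_(2 ^ k)%N) by apply: is_pmf_unif; rewrite card_ord expn_gt0.
exists ('I_(2 ^ k)%N * bool)%type, (prodp (unif 'I_(2 ^ k)%N) (bern t)).
split; first by apply: is_pmf_prod => //; exact: is_pmf_bern.
rewrite entropy_prod //; last exact: is_pmf_bern.
rewrite entropy_unif card_ord ?expn_gt0 // ent_t.
rewrite /log2 natrX lnXn // -[ln _ *+ _]mulr_natr mulrAC divff ?mul1r.
  by rewrite addrC subrK.
by rewrite gt_eqF // ln2_gt0.
Qed.

Lemma entvec_zip3 (T1 T2 T3 S1 S2 S3 : finType)
    (p : {ffun T1 * T2 * T3 -> R}) (q : {ffun S1 * S2 * S3 -> R}) :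
  is_pmf p -> is_pmf q ->
  entvec (pushpmf (prodp p q) (@zip3 _ _ _ _ _ _)) = entvec p + entvec q.
Proof.
move=> p_pmf q_pmf; apply/rowP => i; rewrite !mxE.
case: i => [[|[|[|[|[|[|[|//]]]]]]] _] /=; rewrite Hf_push.
- 1-3: exact: (Hf_prod (h := id)).
- 1-3: exact: (Hf_prod (@zip2_inj _ _ _ _)).
- exact: (Hf_prod (@zip3_inj _ _ _ _ _ _)).
Qed.

Lemma Gamma3starD u v : Gamma3star u -> Gamma3star v -> Gamma3star (u + v :> 'rV[R]_7).
Proof.
move=> [T1 [T2 [T3 [p [p_pmf ->]]]]] [S1 [S2 [S3 [q [q_pmf ->]]]]].
exists (T1 * S1)%type, (T2 * S2)%type, (T3 * S3)%type.
exists (pushpmf (prodp p q) (@zip3 _ _ _ _ _ _)).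
by split; [apply/is_pmf_push/is_pmf_prod | rewrite entvec_zip3].
Qed.

Local Ltac Hf_copy_or_constant :=
  apply/esym; first
    [ apply: Hf_inj_entropy;
      by move=> a b /= /eqP; rewrite ?xpair_eqE ?eqxx ?andbT => /eqP
    | apply: Hf_subsingleton => //; by do ?case ].

Lemma Gamma3star_e1 (l : R) : 0 <= l -> Gamma3star (l *: e1 R).
Proof.
move=> /entropy_onto[A [q [q_pmf <-]]].
exists A, unit, unit, (pushpmf q (fun a => (a, tt, tt))); split; first exact: is_pmf_push.
apply/rowP => i; rewrite !mxE.
case: i => [[|[|[|[|[|[|[|//]]]]]]] _] /=; rewrite Hf_push ?mulr1 ?mulr0.
all: Hf_copy_or_constant.
Qed.

Lemma Gamma3star_e2 (l : R) : 0 <= l -> Gamma3star (l *: e2 R).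
Proof.
move=> /entropy_onto[A [q [q_pmf <-]]].
exists unit, A, unit, (pushpmf q (fun a => (tt, a, tt))); split; first exact: is_pmf_push.
apply/rowP => i; rewrite !mxE.
case: i => [[|[|[|[|[|[|[|//]]]]]]] _] /=; rewrite Hf_push ?mulr1 ?mulr0.
all: Hf_copy_or_constant.
Qed.

Lemma Gamma3star_e3 (l : R) : 0 <= l -> Gamma3star (l *: e3 R).
Proof.
move=> /entropy_onto[A [q [q_pmf <-]]].
exists unit, unit, A, (pushpmf q (fun a => (tt, tt, a))); split; first exact: is_pmf_push.
apply/rowP => i; rewrite !mxE.
case: i => [[|[|[|[|[|[|[|//]]]]]]] _] /=; rewrite Hf_push ?mulr1 ?mulr0.
all: Hf_copy_or_constant.
Qed.

Lemma Gamma3star_e123' n : Gamma3star (log2 n.+1%:R *: e123' R).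
Proof.
pose u := prodp (unif 'I_n.+1) (unif 'I_n.+1).
have unif_pmf : is_pmf (unif 'I_n.+1) by apply: is_pmf_unif; rewrite card_ord.
have u_pmf : is_pmf u by exact: is_pmf_prod.
have ent_unif : entropy (unif 'I_n.+1) = log2 n.+1%:R by rewrite entropy_unif card_ord.
have Hu_inj (Y : finType) (f : 'I_n.+1 * 'I_n.+1 -> Y) :
    injective f -> Hf u f = log2 n.+1%:R *+ 2.
  by move=> f_inj; rewrite Hf_inj_entropy // entropy_prod // ent_unif.
have Hu_fst : Hf u (fun s => s.1) = log2 n.+1%:R.
  by rewrite (Hf_prod_fst id) // Hf_inj_entropy.
have Hu_snd : Hf u (fun s => s.2) = log2 n.+1%:R.
  by rewrite (Hf_prod_snd id) // Hf_inj_entropy.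
have Hu_add : Hf u (fun s => s.1 + s.2) = log2 n.+1%:R.
  rewrite -Hu_snd (Hf_comp_bij (fun s => s.2) (tau := fun s => (s.1, s.1 + s.2))) //.
    by exists (fun s => (s.1, s.2 - s.1)) => -[a b] /=; rewrite addrC ?addKr ?subrK.
  by move=> s; rewrite !ffunE.
exists 'I_n.+1, 'I_n.+1, 'I_n.+1, (pushpmf u (fun s => (s.1, s.2, s.1 + s.2))).
split; first exact: is_pmf_push.
apply/rowP => i; rewrite !mxE.
case: i => [[|[|[|[|[|[|[|//]]]]]]] _] /=; rewrite Hf_push ?mulr1.
- by rewrite Hu_fst.
- by rewrite Hu_snd.
- by rewrite Hu_add.
- by rewrite Hu_inj ?mulr_natr // => -[a b] [c d] /= [-> ->].
- rewrite Hu_inj ?mulr_natr //; apply: (can_inj (g := fun y => (y.1, y.2 - y.1))).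
  by move=> -[a b] /=; rewrite addrC addKr.
- rewrite Hu_inj ?mulr_natr //; apply: (can_inj (g := fun y => (y.2 - y.1, y.1))).
  by move=> -[a b] /=; rewrite addrK.
- by rewrite Hu_inj ?mulr_natr //; apply: (can_inj (g := fst)) => -[].
Qed.

End Entropy.

Theorem corollary1 (R : realType) :
  @Theta_in R `<=` @Theta R `&` @Gamma3star R.
Proof.
move=> _ [l1 [l2 [l3 [m [l1_ge0 l2_ge0 l3_ge0 m_gt0 ->]]]]].
case: m m_gt0 => // n _; split.
  by exists l1, l2, l3, (log2 n.+1%:R); split=> //; exact: log2_natr_ge0.
apply: Gamma3starD; last exact: Gamma3star_e123'.
apply: Gamma3starD; last exact: Gamma3star_e3.
by apply: Gamma3starD; [exact: Gamma3star_e1 | exact: Gamma3star_e2].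
Qed.
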